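(* Let $\rho\in(0,1]$, let $M$ be a finite set, and let $(S_i)_{i\in I}$ be a nonempty family (with $I$ finite) of subsets of $M$ such that $|S_i|\geq\rho|M|$ for all $i\in I$. Set $k(\rho):=\lceil\rho^{-1}\rceil+1$ and $t(\rho):=\rho/\Delta_{\lceil\rho^{-1}\rceil}$, where $\Delta_n:=\frac12 n(n+1)$. Then: (1) If $J\subseteq I$ with $|J|\geq k(\rho)$, then there exist distinct $i,j\in J$ with $|S_i\cap S_j|\geq t(\rho)|M|$. (2) There exists $i\in I$ such that for at least $\frac{|I|-(k(\rho)-1)}{k(\rho)-1}$ many $j\in I\setminus\{i\}$ we have $|S_i\cap S_j|\geq t(\rho)|M|$. (3) If $|I|\geq 2(k(\rho)-1)$, then there exists $i\in I$ such that for at least $\frac{|I|}{2(k(\rho)-1)}$ many $j\in I\setminus\{i\}$ we have $|S_i\cap S_j|\geq t(\rho)|M|$. *)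

From HB Require Import structures.
From mathcomp Require Import all_boot all_order all_algebra.
Set Implicit Arguments. Unset Strict Implicit. Unset Printing Implicit Defensive.
Import Order.TTheory GRing.Theory Num.Theory.
Local Open Scope ring_scope.

Definition ceil_inv {R : archiRealFieldType} (rho : R) : nat :=
  `|Num.ceil (rho^-1)|%N.

Definition kk {R : archiRealFieldType} (rho : R) : nat := (ceil_inv rho).+1.

Definition Delta {R : archiRealFieldType} (n : nat) : R :=
  (n * n.+1)%:R / 2%:R.

Definition tt {R : archiRealFieldType} (rho : R) : R :=
  rho / Delta (ceil_inv rho).

From HB Require Import structures.
From mathcomp Require Import all_boot all_order all_algebra.
From mathcomp Require Import zify ring lra.
Import Order.TTheory GRing.Theory Num.Theory.

Set Implicit Arguments.
Unset Strict Implicit.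
Unset Printing Implicit Defensive.

(* Let n = ceil(1/rho) and let c(x) be the number of sets S_j, j in J, that
   contain x.  Since c^2 >= 3c - 2 pointwise, summing over M gives
   sum_{i != j} |S_i :&: S_j| >= 2 sum_i |S_i| - 2|M|.  When |J| = n + 1 the
   right-hand side is at least 2 (n + 1) rho |M| - 2|M| >= 2 rho |M|, while the
   left-hand side has n (n + 1) terms, so one of them is at least
   2 rho |M| / (n (n + 1)) = t(rho) |M|.  Thus no n + 1 indices are pairwise
   far apart, and the greedy bound on independent sets in the graph of "close"
   pairs yields a vertex of degree at least |I| / n - 1. *)

Lemma card_sum_indicator (T : finType) (A : {set T}) :
  #|A| = \sum_x (x \in A : nat).
Proof. by rewrite -sum1_card big_mkcond; apply: eq_bigr => x _; case: (x \in A). Qed.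

Section CoverMultiplicity.

Variables (M I : finType) (S : I -> {set M}) (J : {set I}).

Definition cover_mult (x : M) : nat := \sum_(i in J) (x \in S i : nat).

Lemma sum_card_cover_mult : \sum_(i in J) #|S i| = \sum_x cover_mult x.
Proof.
by rewrite exchange_big /=; apply: eq_bigr => i _; rewrite card_sum_indicator.
Qed.

Lemma sum_card_setI_cover_mult :
  \sum_(i in J) \sum_(j in J) #|S i :&: S j| = \sum_x cover_mult x * cover_mult x.
Proof.
transitivity (\sum_(i in J) \sum_(j in J) \sum_x ((x \in S i) * (x \in S j) : nat)).
  apply: eq_bigr => i _; apply: eq_bigr => j _; rewrite card_sum_indicator.
  by apply: eq_bigr => x _; rewrite inE; case: (x \in S i); case: (x \in S j).
under [RHS]eq_bigr => x _ do rewrite big_distrlr /=.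
by under eq_bigr => i _ do rewrite exchange_big /=; rewrite exchange_big.
Qed.

Lemma leq_double_sum_card :
  2 * \sum_(i in J) #|S i| <=
  \sum_(i in J) \sum_(j in J | j != i) #|S i :&: S j| + 2 * #|M|.
Proof.
have diag_split : \sum_(i in J) \sum_(j in J) #|S i :&: S j| =
    \sum_(i in J) #|S i| + \sum_(i in J) \sum_(j in J | j != i) #|S i :&: S j|.
  by rewrite -big_split; apply: eq_bigr => i iJ; rewrite (bigD1 i) //= setIid.
have sq_bound : 3 * \sum_x cover_mult x <= \sum_x cover_mult x * cover_mult x + 2 * #|M|.
  rewrite -sum1_card !big_distrr -big_split /=; apply: leq_sum => x _.
  by case: (cover_mult x) => [|[|k]] //; nia.
move: diag_split sq_bound.
rewrite sum_card_setI_cover_mult sum_card_cover_mult; lia.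
Qed.

End CoverMultiplicity.

Section IndependentSets.

Variables (I : finType) (e : rel I).
Hypothesis e_sym : symmetric e.

Definition nbhd (i : I) : {set I} := [set j | (j != i) && e i j].

Definition independent (A : {set I}) : Prop :=
  {in A &, forall a b, a != b -> ~~ e a b}.

Lemma independent_subset_large (D : nat) (U : {set I}) :
  (forall i, #|nbhd i| <= D) ->
  exists A : {set I}, [/\ A \subset U, independent A & #|U| <= D.+1 * #|A|].
Proof.
move=> degD; have [k] := ubnP #|U|; elim: k U => // k IH U; rewrite ltnS => leUk.
have [->|[x xU]] := set_0Vmem U.
  by exists set0; split; rewrite ?sub0set ?cards0 // => a b; rewrite inE.
pose U' := U :\: (x |: nbhd x).
have cardU : #|U| = #|U :&: (x |: nbhd x)| + #|U'| by rewrite cardsID.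
have near_x_le : #|U :&: (x |: nbhd x)| <= D.+1.
  apply: leq_trans (subset_leq_card (subsetIr _ _)) _.
  by rewrite cardsU1 (leq_add (leq_b1 _) (degD x)).
have near_x_gt0 : 0 < #|U :&: (x |: nbhd x)|.
  by apply/card_gt0P; exists x; rewrite !inE xU eqxx.
have [A' [sA'U' indA' cardA']] : exists A' : {set I},
    [/\ A' \subset U', independent A' & #|U'| <= D.+1 * #|A'|].
  by apply: IH; lia.
have far_from_x b : b \in A' -> (b != x) && ~~ e x b.
  move=> /(subsetP sA'U'); rewrite !inE negb_or => /andP[/andP[bx]].
  by rewrite bx.
have xA' : x \notin A' by apply/negP => /far_from_x; rewrite eqxx.
exists (x |: A'); split.
- by rewrite subUset sub1set xU (subset_trans sA'U') ?subsetDl.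
- move=> a b; rewrite !inE => /predU1P[->|aA'] /predU1P[->|bA'] ab.
  + by rewrite eqxx in ab.
  + by case/andP: (far_from_x b bA').
  + by rewrite e_sym; case/andP: (far_from_x a aA').
  + exact: indA'.
- by rewrite cardsU1 xA'; lia.
Qed.

Lemma exists_nbhd_large (n : nat) (i0 : I) :
  (forall A, independent A -> #|A| <= n) ->
  exists i, #|I| <= (#|nbhd i|).+1 * n.
Proof.
move=> indep_le.
have [imax _ maxdeg] := @arg_maxnP I i0 predT (fun i => #|nbhd i|) isT.
have [A [_ indA cardA]] := @independent_subset_large _ [set: I] (fun i => maxdeg i isT).
by exists imax; rewrite -cardsT (leq_trans cardA) ?leq_mul ?indep_le.
Qed.

End IndependentSets.

Local Open Scope ring_scope.

Lemma natr_mul_ge1_gt0 (R : numDomainType) (n : nat) (x : R) :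
  1 <= n%:R * x -> (0 < n)%N.
Proof. by case: n => //; rewrite mul0r ler10. Qed.

Lemma ceil_inv_mulr_ge1 (R : archiRealFieldType) (rho : R) :
  0 < rho -> 1 <= (ceil_inv rho)%:R * rho.
Proof.
move=> rho_gt0; have inv_gt0 : 0 < rho^-1 by rewrite invr_gt0.
rewrite /ceil_inv natr_absz ger0_norm ?ceil_ge0 ?(lt_trans _ inv_gt0) ?ltrN10 //.
by rewrite -{1}(mulVf (lt0r_neq0 rho_gt0)) ler_pM2r // ceil_ge.
Qed.

Lemma sum_lt_card_mul (R : numDomainType) (I : finType) (A : {set I})
    (F : I -> R) (c : R) :
  A != set0 -> {in A, forall i, F i < c} -> \sum_(i in A) F i < #|A|%:R * c.
Proof.
case/set0Pn => a aA ltFc; rewrite mulr_natl -sumr_const.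
by apply: ltr_sum => //; apply/hasP; exists a; rewrite ?mem_index_enum.
Qed.

Lemma ler_subn_divn (R : realFieldType) (N d n : nat) :
  (0 < n)%N -> (N <= d.+1 * n)%N -> (N%:R - n%:R) / n%:R <= d%:R :> R.
Proof.
move=> n_gt0; rewrite -(ler_nat R) natrM -addn1 natrD => leN.
have n_gt0R : 0 < n%:R :> R by rewrite ltr0n.
by rewrite ler_pdivrMr //; lra.
Qed.

Lemma ler_divn_half (R : realFieldType) (N n : nat) :
  (0 < n)%N -> (2 * n <= N)%N ->
  N%:R / (2 * n)%:R <= (N%:R - n%:R) / n%:R :> R.
Proof.
move=> n_gt0; rewrite -(ler_nat R) natrM => le2n.
have n_gt0R : 0 < n%:R :> R by rewrite ltr0n.
by rewrite ler_pdivrMr ?mulr_gt0 // mulrCA divfK ?lt0r_neq0 //; lra.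
Qed.

Section LargeIntersection.

Variables (R : archiRealFieldType) (M I : finType) (S : I -> {set M}).
Variables (rho : R) (n : nat).
Hypothesis n_rho_ge1 : 1 <= n%:R * rho.

Lemma exists_pair_large_setI_card (J : {set I}) :
  #|J| = n.+1 -> {in J, forall i, rho * #|M|%:R <= #|S i|%:R} ->
  exists i j, [/\ i \in J, j \in J, i != j &
                  rho / Delta n * #|M|%:R <= #|S i :&: S j|%:R].
Proof.
move=> cardJ large; set m : R := #|M|%:R; set t := rho / Delta n.
have n_gt0 := natr_mul_ge1_gt0 n_rho_ge1.
have [/existsP[[i j] /and4P[/= iJ jJ ij le]] | none] :=
  boolP [exists p : I * I, [&& p.1 \in J, p.2 \in J, p.1 != p.2 &
                               t * m <= #|S p.1 :&: S p.2|%:R]].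
  by exists i, j.
have small i j : i \in J -> j \in J -> i != j -> #|S i :&: S j|%:R < t * m.
  move=> iJ jJ ij; rewrite ltNge; apply: contraNN none => le.
  by apply/existsP; exists (i, j); rewrite /= iJ jJ ij.
have n_n1_t : (n * n.+1)%:R * t = 2 * rho.
  have : (0 < n%:R :> R) by rewrite ltr0n.
  by rewrite /t /Delta natrM -addn1 natrD => ?; field; rewrite !lt0r_neq0 //; lra.
have sum_lb : n.+1%:R * (rho * m) <= (\sum_(i in J) #|S i|)%:R.
  by rewrite -cardJ mulr_natl -sumr_const natr_sum ler_sum.
have off_lb := leq_double_sum_card S J.
rewrite -(ler_nat R) natrD !natrM in off_lb.
have inner i : i \in J ->
    (\sum_(j in J | j != i) #|S i :&: S j|)%:R < n%:R * (t * m).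
  move=> iJ; have cardJi : #|J :\ i| = n.
    by move: (cardsD1 i J); rewrite iJ cardJ => -[].
  rewrite natr_sum (eq_bigl (fun j => j \in J :\ i)) => [|j]; last first.
    by rewrite in_setD1 andbC.
  rewrite -cardJi; apply: sum_lt_card_mul => [|j /setD1P[ji jJ]].
  - by rewrite -card_gt0 cardJi.
  - by rewrite small // eq_sym.
have off_ub : (\sum_(i in J) \sum_(j in J | j != i) #|S i :&: S j|)%:R < 2 * rho * m.
  rewrite natr_sum -n_n1_t; apply: (lt_le_trans (sum_lt_card_mul _ inner)).
    by rewrite -card_gt0 cardJ.
  by rewrite cardJ natrM le_eqVlt; apply/predU1l; ring.
have : 0 <= (n%:R * rho - 1) * m by rewrite mulr_ge0 ?subr_ge0.
nra.
Qed.

Lemma exists_pair_large_setI (J : {set I}) :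
  (n.+1 <= #|J|)%N -> {in J, forall i, rho * #|M|%:R <= #|S i|%:R} ->
  exists i j, [/\ i \in J, j \in J, i != j &
                  rho / Delta n * #|M|%:R <= #|S i :&: S j|%:R].
Proof.
move=> leJ large.
have : (0 < #|[set A : {set I} | A \subset J & #|A| == n.+1]|)%N.
  by rewrite cards_draws bin_gt0.
case/card_gt0P => A; rewrite inE => /andP[AJ /eqP cardA].
have [i [j [iA jA ij le]]] :=
  exists_pair_large_setI_card cardA (sub_in1 (subsetP AJ) large).
by exists i, j; split; rewrite ?(subsetP AJ).
Qed.

End LargeIntersection.

Theorem lemma4 (R : archiRealFieldType) (rho : R) (M I : finType)
  (S : I -> {set M})
  (hrho0 : 0 < rho) (hrho1 : rho <= 1)
  (hI : (0 < #|I|)%N)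
  (hS : forall i : I, rho * #|M|%:R <= #|S i|%:R) :
  (forall J : {set I}, (kk rho <= #|J|)%N ->
     exists i j : I, [/\ i \in J, j \in J, i != j &
                         tt rho * #|M|%:R <= #|S i :&: S j|%:R])
  /\
  (exists i : I,
     (#|I|%:R - (kk rho).-1%:R) / (kk rho).-1%:R
       <= (#|[set j : I | (j != i) && (tt rho * #|M|%:R <= #|S i :&: S j|%:R :> R)%R]|%:R :> R))
  /\
  ((2 * (kk rho).-1 <= #|I|)%N ->
   exists i : I,
     #|I|%:R / (2 * (kk rho).-1)%:R
       <= (#|[set j : I | (j != i) && (tt rho * #|M|%:R <= #|S i :&: S j|%:R :> R)%R]|%:R :> R)).
Proof.
have n_rho_ge1 := ceil_inv_mulr_ge1 hrho0.
have n_gt0 := natr_mul_ge1_gt0 n_rho_ge1.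
have part1 (J : {set I}) (leJ : (kk rho <= #|J|)%N) :=
  exists_pair_large_setI n_rho_ge1 leJ (in1W hS).
pose close : rel I := fun i j => tt rho * #|M|%:R <= #|S i :&: S j|%:R.
have close_sym : symmetric close by move=> i j; rewrite /close setIC.
have indep_small A : independent close A -> (#|A| <= ceil_inv rho)%N.
  move=> indA; rewrite leqNgt; apply/negP => /part1[i [j [iA jA ij le]]].
  by move: (indA i j iA jA ij); rewrite /close le.
have [i0 _] := card_gt0P hI.
have [i leI] := exists_nbhd_large close_sym i0 indep_small.
have part2 := ler_subn_divn R n_gt0 leI.
split=> //; split; first by exists i.
by move=> le2n; exists i; apply: le_trans part2; apply: ler_divn_half.
Qed.
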